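(* Let $P_a,P_b,P_c,P_d$ be $n$-qubit Pauli strings with $P_a,P_b$ anticommuting. For $u,v$ let $\alpha_{uv}\in\{0,1\}$ equal $1$ iff $P_u$ and $P_v$ anticommute. Define $\beta\in\{0,1\}$ by $\beta=1$ iff $(\alpha_{ac},\alpha_{bc})\neq(0,0)$, $(\alpha_{ad},\alpha_{bd})\neq(0,0)$ and $(\alpha_{ac},\alpha_{bc})\neq(\alpha_{ad},\alpha_{bd})$. Let $C'$ be any Clifford circuit and $q$ any qubit such that $C'P_aC'^\dagger$ and $C'P_bC'^\dagger$ act non-trivially only on qubit $q$, and write $C'P_xC'^\dagger=\lambda_x\,\tau_x\otimes R_x$ for $x\in\{c,d\}$ as the factor on qubit $q$ tensored with the factor on the other qubits. Then $R_c$ and $R_d$ anticommute if and only if $\alpha_{cd}\oplus\beta=1$ (equivalently, iff $(\alpha_{ac},\alpha_{bc},\alpha_{ad},\alpha_{bd},\alpha_{cd})$ is one of the 16 tuples $(0,0,0,0,1),(0,0,0,1,1),(0,0,1,0,1),(0,0,1,1,1),(0,1,0,0,1),(0,1,0,1,1),(0,1,1,0,0),(0,1,1,1,0),(1,0,0,0,1),(1,0,0,1,0),(1,0,1,0,1),(1,0,1,1,0),(1,1,0,0,1),(1,1,0,1,0),(1,1,1,0,0),(1,1,1,1,1)$). Moreover, in that case there exists a Clifford circuit $C$ and two qubits $q_1\neq q_2$ such that each of $CP_aC^\dagger, CP_bC^\dagger, CP_cC^\dagger, CP_dC^\dagger$ acts non-trivially only on qubits in $\{q_1,q_2\}$.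
   Context: An $n$-qubit Pauli string is $\lambda\,\sigma_1\otimes\cdots\otimes\sigma_n$ with $\sigma_i\in\{I,X,Y,Z\}$, $\lambda\in\{\pm1,\pm i\}$; it acts non-trivially on qubit $i$ if $\sigma_i\neq I$. A Clifford circuit is a unitary generated by $H$, $S$, CNOT; conjugation by it maps Pauli strings to Pauli strings and preserves commutation relations. $\oplus$ denotes XOR. (Standard fact available: any two anticommuting Pauli strings can be simultaneously conjugated by some Clifford circuit to act non-trivially on a single common qubit, and $n\ge 2$ is assumed.) *)

From mathcomp Require Import all_boot all_order all_algebra.
Set Implicit Arguments. Unset Strict Implicit. Unset Printing Implicit Defensive.
Import GRing.Theory.
Local Open Scope ring_scope.

(* A Pauli string on n qubits, encoded as (k, x, z) meaning
   i^k * (X^{x_0} Z^{z_0}) (x) ... (x) (X^{x_{n-1}} Z^{z_{n-1}}).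
   Every lambda * sigma_1 (x) ... (x) sigma_n with lambda in {+-1,+-i} has a
   unique such encoding (Y = i X Z). *)
Definition Pauli (n : nat) := ('Z_4 * {ffun 'I_n -> bool} * {ffun 'I_n -> bool})%type.

Definition ph n (P : Pauli n) : 'Z_4 := P.1.1.
Definition xb n (P : Pauli n) : {ffun 'I_n -> bool} := P.1.2.
Definition zb n (P : Pauli n) : {ffun 'I_n -> bool} := P.2.

Inductive letter := LI | LX | LY | LZ.

Definition letter_at n (P : Pauli n) (i : 'I_n) : letter :=
  match xb P i, zb P i with
  | false, false => LI | true, false => LX | true, true => LY | false, true => LZ
  end.

Definition is_LI (l : letter) : bool := if l is LI then true else false.

Definition nontrivial_on n (P : Pauli n) (i : 'I_n) : bool := ~~ is_LI (letter_at P i).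

(* Product of Pauli strings: X^x Z^z X^x' Z^z' = (-1)^{z x'} X^{x+x'} Z^{z+z'} *)
Definition pmul n (P Q : Pauli n) : Pauli n :=
  (ph P + ph Q + (\sum_(i < n) ((zb P i && xb Q i) : nat)%:R) *+ 2,
   [ffun i => xb P i (+) xb Q i],
   [ffun i => zb P i (+) zb Q i]).

Definition pneg n (P : Pauli n) : Pauli n := (ph P + 2%:R, xb P, zb P).

Definition anticommute n (P Q : Pauli n) : bool := pmul P Q == pneg (pmul Q P).

Inductive gate (n : nat) :=
| Hgate of 'I_n
| Sgate of 'I_n
| CNOTgate of 'I_n & 'I_n. (* control, target *)

Definition valid_gate n (g : gate n) : bool :=
  if g is CNOTgate c t then c != t else true.

Definition gate_conj n (g : gate n) (P : Pauli n) : Pauli n :=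
  match g with
  | Hgate j => (* X -> Z, Z -> X *)
      (ph P + ((xb P j && zb P j) : nat)%:R *+ 2,
       [ffun i => if i == j then zb P i else xb P i],
       [ffun i => if i == j then xb P i else zb P i])
  | Sgate j => (* X -> Y = iXZ, Z -> Z *)
      (ph P + (xb P j : nat)%:R,
       xb P,
       [ffun i => if i == j then zb P i (+) xb P i else zb P i])
  | CNOTgate c t => (* X_c -> X_c X_t, Z_t -> Z_c Z_t *)
      (ph P,
       [ffun i => if i == t then xb P t (+) xb P c else xb P i],
       [ffun i => if i == c then zb P c (+) zb P t else zb P i])
  end.

(* A Clifford circuit is a sequence of valid gates [g1; ...; gm]
   (g1 applied first, unitary C = gm ... g1). *)
Definition clifford_circuit n (C : seq (gate n)) : bool := all (@valid_gate n) C.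

Definition circ_conj n (C : seq (gate n)) (P : Pauli n) : Pauli n :=
  foldl (fun Q g => gate_conj g Q) P C.

Definition acts_only_on n (P : Pauli n) (S : pred 'I_n) : Prop :=
  forall i, nontrivial_on P i -> S i.

(* Writing P = lambda tau (x) R with tau the factor on qubit q:
   R (the factor on the other qubits), represented as an n-qubit string with
   the identity on qubit q (and trivial phase). *)
Definition rest_factor n (q : 'I_n) (P : Pauli n) : Pauli n :=
  (0, [ffun i => if i == q then false else xb P i],
      [ffun i => if i == q then false else zb P i]).

Definition betab (ac bc ad bd : bool) : bool :=
  [&& (ac, bc) != (false, false), (ad, bd) != (false, false) & (ac, bc) != (ad, bd)].

From mathcomp Require Import all_boot all_order all_algebra.
From mathcomp Require Import zify.
Set Implicit Arguments. Unset Strict Implicit. Unset Printing Implicit Defensive.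
Import GRing.Theory.

(* Anticommutation of Pauli strings is the symplectic form on their (x, z) bit
   vectors, and Clifford gates preserve it.  After C', P_a and P_b live on qubit
   q, where they form a symplectic basis, so the q-part of the form on P_c, P_d
   is the determinant of their coordinates in that basis, which is beta; the
   rest factors therefore satisfy w(R_c, R_d) = alpha_cd (+) beta.  When R_c and
   R_d anticommute, a symplectic Gram-Schmidt step by gates avoiding q (which
   fix P_a and P_b) turns R_c into X_p for some p <> q and then clears R_d off
   p, using single-qubit gates and CNOTs to or from p on every other qubit. *)

Lemma double_Z4_eq_add2 (a b : nat) :
  ((a%:R *+ 2 == b%:R *+ 2 + 2%:R :> 'Z_4)%R) = odd (a + b).
Proof.
have E k : (k%:R *+ 2 : 'Z_4)%R = (k * 2)%N%:R%R by rewrite natrM mulr_natr.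
rewrite !E -natrD -val_eqE /= !val_Zp_nat //.
have -> : odd (a + b) = ((a + b) %% 2 == 1)%N by rewrite modn2; case: odd.
apply/eqP/eqP => H; lia.
Qed.

Section PauliSymplectic.
Variable n : nat.
Implicit Types (P Q : Pauli n) (i j p q : 'I_n).

Definition symp1 P Q i := (zb P i && xb Q i) (+) (zb Q i && xb P i).
Definition symp P Q := \big[addb/false]_(i < n) symp1 P Q i.

Lemma odd_sum_bool (f : 'I_n -> bool) :
  odd (\sum_(i < n) (f i : nat)) = \big[addb/false]_(i < n) f i.
Proof.
rewrite (big_morph odd oddD (erefl (odd 0))).
by apply: eq_bigr => i _; case: (f i).
Qed.

Lemma anticommuteE P Q : anticommute P Q = symp P Q.
Proof.
rewrite /anticommute /pmul /pneg /= /symp /symp1.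
have xbC : [ffun i => xb P i (+) xb Q i] = [ffun i => xb Q i (+) xb P i].
  by apply/ffunP => i; rewrite !ffunE addbC.
have zbC : [ffun i => zb P i (+) zb Q i] = [ffun i => zb Q i (+) zb P i].
  by apply/ffunP => i; rewrite !ffunE addbC.
rewrite xbC zbC !xpair_eqE !eqxx !andbT big_split /= -!odd_sum_bool -oddD.
rewrite -double_Z4_eq_add2 [(ph Q + ph P)%R]addrC -!addrA.
by rewrite (inj_eq (addrI (ph P))) (inj_eq (addrI (ph Q))) !natr_sum.
Qed.

Lemma nontrivial_onE P i : nontrivial_on P i = xb P i || zb P i.
Proof. by rewrite /nontrivial_on /letter_at; case: (xb P i); case: (zb P i). Qed.

Lemma acts_only_on1 q P : acts_only_on P (pred1 q) ->
  forall i, i != q -> ~~ nontrivial_on P i.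
Proof. by move=> Pq i; apply: contra (Pq i). Qed.

Lemma acts_only_on2 q p P : (forall j, j != q -> j != p -> ~~ nontrivial_on P j) ->
  acts_only_on P (pred2 q p).
Proof.
by move=> triv j; apply: contraLR; rewrite /= negb_or => /andP [jq jp]; apply: triv.
Qed.

Lemma symp1_trivial P Q i : ~~ nontrivial_on P i -> symp1 P Q i = false.
Proof.
by rewrite nontrivial_onE /symp1 => /norP [/negbTE -> /negbTE ->]; rewrite andbF.
Qed.

Lemma symp_supp1 P Q p :
  (forall i, i != p -> ~~ nontrivial_on P i) -> symp P Q = symp1 P Q p.
Proof.
by move=> Pp; rewrite /symp (bigD1 p) //= big1 ?addbF // => i /Pp /symp1_trivial.
Qed.

Lemma xb_rest q P i : xb (rest_factor q P) i = (i != q) && xb P i.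
Proof. by rewrite /= ffunE; case: (i == q). Qed.

Lemma zb_rest q P i : zb (rest_factor q P) i = (i != q) && zb P i.
Proof. by rewrite /= ffunE; case: (i == q). Qed.

Lemma nontrivial_rest q P i :
  nontrivial_on (rest_factor q P) i = (i != q) && nontrivial_on P i.
Proof. by rewrite !nontrivial_onE xb_rest zb_rest andb_orr. Qed.

Lemma symp_rest q P Q :
  symp P Q = symp1 P Q q (+) symp (rest_factor q P) (rest_factor q Q).
Proof.
rewrite /symp (bigD1 q) //= [in RHS](bigD1 q) //=.
rewrite [symp1 (rest_factor q P) _ q]/symp1 !xb_rest !zb_rest eqxx /=.
by congr addb; apply: eq_bigr => i iq; rewrite /symp1 !xb_rest !zb_rest iq.
Qed.

Lemma symp_nontrivial P Q : symp P Q -> exists i, nontrivial_on P i.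
Proof.
case: (pickP (nontrivial_on P)) => [i Pi _|triv]; first by exists i.
by rewrite /symp big1 // => i _; rewrite symp1_trivial ?triv.
Qed.


(* On one qubit, anticommuting A and B form a symplectic basis in which P has
   coordinates (symp B P, symp A P); symp P Q is the determinant of the
   coordinates of P and Q, and for two vectors of F_2^2 this is betab. *)
Lemma symp1_betab A B P Q q : symp1 A B q ->
  symp1 P Q q = betab (symp1 A P q) (symp1 B P q) (symp1 A Q q) (symp1 B Q q).
Proof.
rewrite /symp1 /betab.
by case: (xb A q); case: (zb A q); case: (xb B q); case: (zb B q);
   case: (xb P q); case: (zb P q); case: (xb Q q); case: (zb Q q).
Qed.

Lemma symp_rest_betab q A B P Q :
  acts_only_on A (pred1 q) -> acts_only_on B (pred1 q) -> symp A B ->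
  symp (rest_factor q P) (rest_factor q Q) =
  symp P Q (+) betab (symp A P) (symp B P) (symp A Q) (symp B Q).
Proof.
move=> /acts_only_on1 Aq /acts_only_on1 Bq.
rewrite !(symp_supp1 _ Aq) !(symp_supp1 _ Bq) => AB.
by rewrite (symp_rest q P Q) -(symp1_betab _ _ AB) addbC addKb.
Qed.

Definition gate_qubits (g : gate n) : seq 'I_n :=
  match g with Hgate j | Sgate j => [:: j] | CNOTgate c t => [:: c; t] end.

Definition gate_within (S : pred 'I_n) (g : gate n) :=
  valid_gate g && all S (gate_qubits g).

Lemma clifford_within S C : all (gate_within S) C -> clifford_circuit C.
Proof. by apply: sub_all => g /andP []. Qed.

Lemma sub_within (S S' : pred 'I_n) C :
  {subset S <= S'} -> all (gate_within S) C -> all (gate_within S') C.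
Proof.
move=> SS'; apply: sub_all => g /andP [vg /allP gS]; rewrite /gate_within vg.
by apply/allP => i /gS /SS'.
Qed.

Lemma circ_cat C1 C2 P : circ_conj (C1 ++ C2) P = circ_conj C2 (circ_conj C1 P).
Proof. by rewrite /circ_conj foldl_cat. Qed.

Lemma big_addb_eq_off2 (f g : 'I_n -> bool) c t : c != t ->
  (forall i, i != c -> i != t -> f i = g i) -> f c (+) f t = g c (+) g t ->
  \big[addb/false]_i f i = \big[addb/false]_i g i.
Proof.
move=> ct fg fgct; rewrite (bigD1 c) // [in RHS](bigD1 c) //= (bigD1 t) /=;
  last by rewrite eq_sym ct.
rewrite [in RHS](bigD1 t) /=; last by rewrite eq_sym ct.
rewrite !addbA fgct; congr addb.
by apply: eq_bigr => i /andP [ic it]; apply: fg.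
Qed.

Lemma symp_gate g P Q : valid_gate g ->
  symp (gate_conj g P) (gate_conj g Q) = symp P Q.
Proof.
rewrite /symp /symp1; case: g => [j|j|c t] /= ct.
- apply: eq_bigr => i _; rewrite !ffunE; case: (i == j) => //.
  by case: (xb P i); case: (zb P i); case: (xb Q i); case: (zb Q i).
- apply: eq_bigr => i _; rewrite !ffunE; case: (i == j) => //.
  by case: (xb P i); case: (zb P i); case: (xb Q i); case: (zb Q i).
- symmetry; apply: (big_addb_eq_off2 ct) => [i ic it|].
    by rewrite !ffunE (negbTE ic) (negbTE it).
  rewrite !ffunE !eqxx (negbTE ct) eq_sym (negbTE ct).
  by case: (xb P c); case: (zb P c); case: (xb Q c); case: (zb Q c);
     case: (xb P t); case: (zb P t); case: (xb Q t); case: (zb Q t).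
Qed.

Lemma symp_circ C P Q : clifford_circuit C ->
  symp (circ_conj C P) (circ_conj C Q) = symp P Q.
Proof.
elim: C P Q => [//|g C IH] P Q /andP [vg vC].
by rewrite /circ_conj /= -/(circ_conj C _) -/(circ_conj C _) IH // symp_gate.
Qed.

Lemma gate_conj_out g P i : i \notin gate_qubits g ->
  xb (gate_conj g P) i = xb P i /\ zb (gate_conj g P) i = zb P i.
Proof.
case: g => [j|j|c t] /=; rewrite ?inE.
- by move=> /negbTE ij; rewrite !ffunE ij.
- by move=> /negbTE ij; rewrite !ffunE ij.
- by case/norP => /negbTE ic /negbTE it; rewrite !ffunE ic it.
Qed.

Lemma circ_conj_out (S : pred 'I_n) C P i : all (gate_within S) C -> ~~ S i ->
  xb (circ_conj C P) i = xb P i /\ zb (circ_conj C P) i = zb P i.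
Proof.
move=> CS Si; elim: C P CS => [//|g C IH] P /andP [/andP [_ gS] CS].
have [xg zg] : xb (gate_conj g P) i = xb P i /\ zb (gate_conj g P) i = zb P i.
  by apply: gate_conj_out; apply: contra Si => /(allP gS).
by have [-> ->] := IH (gate_conj g P) CS.
Qed.

Lemma nontrivial_circ_out (S : pred 'I_n) C P i : all (gate_within S) C -> ~~ S i ->
  nontrivial_on (circ_conj C P) i = nontrivial_on P i.
Proof. by move=> CS Si; rewrite !nontrivial_onE; have [-> ->] := circ_conj_out P CS Si. Qed.

Lemma cnot_conj_id c t P : ~~ xb P c -> ~~ zb P t -> gate_conj (CNOTgate c t) P = P.
Proof.
case: P => [[k x] z] /= /negbTE xc /negbTE zt; congr (_, _, _); apply/ffunP => i.
- by rewrite ffunE; case: eqP => [->|]; rewrite ?xc ?addbF.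
- by rewrite ffunE; case: eqP => [->|]; rewrite ?zt ?addbF.
Qed.

Lemma gate_conj_id g P : all (fun i => ~~ nontrivial_on P i) (gate_qubits g) ->
  gate_conj g P = P.
Proof.
case: g => [j|j|c t] /=; rewrite !nontrivial_onE ?andbT.
- case: P => [[k x] z] /= /norP [/negbTE xj /negbTE zj].
  rewrite xj ?mul0rn addr0; congr (_, _, _); apply/ffunP => i; rewrite ffunE.
    by case: eqP => [->|]; rewrite ?xj ?zj.
  by case: eqP => [->|]; rewrite ?xj ?zj.
- case: P => [[k x] z] /= /norP [/negbTE xj /negbTE zj].
  rewrite xj ?mul0rn addr0; congr (_, _, _); apply/ffunP => i; rewrite ffunE.
  by case: eqP => [->|]; rewrite ?xj ?zj.
- by case/andP => /norP [xc _] /norP [_ zt]; apply: cnot_conj_id.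
Qed.

Lemma circ_conj_id (S : pred 'I_n) C P : all (gate_within S) C ->
  (forall i, S i -> ~~ nontrivial_on P i) -> circ_conj C P = P.
Proof.
move=> CS PS; elim: C CS => [//|g C IH] /andP [/andP [_ gS] CS].
rewrite /circ_conj /= gate_conj_id; first exact: IH.
by apply/allP => i /(allP gS) /PS.
Qed.

Lemma symp_rest_circ q C P Q : all (gate_within (predC1 q)) C ->
  symp (rest_factor q (circ_conj C P)) (rest_factor q (circ_conj C Q)) =
  symp (rest_factor q P) (rest_factor q Q).
Proof.
move=> Cq; have qq : ~~ predC1 q q by rewrite /= eqxx.
have [xP zP] := circ_conj_out P Cq qq; have [xQ zQ] := circ_conj_out Q Cq qq.
have restE R T : symp (rest_factor q R) (rest_factor q T) = symp1 R T q (+) symp R T.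
  by rewrite (symp_rest q R) addKb.
by rewrite !restE symp_circ ?(clifford_within Cq) // /symp1 xP zP xQ zQ.
Qed.

Definition toX j P : seq (gate n) :=
  if zb P j then [:: if xb P j then Sgate j else Hgate j] else [::].

Definition toZ j P : seq (gate n) :=
  if xb P j then (if zb P j then [:: Sgate j; Hgate j] else [:: Hgate j]) else [::].

Lemma toX_within j P : all (gate_within (pred1 j)) (toX j P).
Proof. by rewrite /toX /gate_within; case: (zb P j); case: (xb P j); rewrite /= ?eqxx. Qed.

Lemma toZ_within j P : all (gate_within (pred1 j)) (toZ j P).
Proof. by rewrite /toZ /gate_within; case: (xb P j); case: (zb P j); rewrite /= ?eqxx. Qed.

Lemma toX_spec j P : let P' := circ_conj (toX j P) P in
  xb P' j = nontrivial_on P j /\ ~~ zb P' j.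
Proof.
rewrite /toX nontrivial_onE.
by case Ex: (xb P j); case Ez: (zb P j); rewrite /= ?ffunE ?eqxx ?Ex ?Ez.
Qed.

Lemma toZ_spec j P : let P' := circ_conj (toZ j P) P in
  ~~ xb P' j /\ zb P' j = nontrivial_on P j.
Proof.
rewrite /toZ nontrivial_onE.
by case Ex: (xb P j); case Ez: (zb P j); rewrite /= ?ffunE ?eqxx ?Ex ?Ez.
Qed.

(* The CNOT from p copies the X on qubit p onto qubit j, cancelling it there. *)
Lemma clear_X_step p j P : j != p -> xb P p -> ~~ zb P p ->
  exists2 C, all (gate_within (pred2 j p)) C &
    let P' := circ_conj C P in [/\ xb P' p, ~~ zb P' p & ~~ nontrivial_on P' j].
Proof.
move=> jp xp zp; have pj : ~~ pred1 j p by rewrite /= eq_sym.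
have toXj : all (gate_within (pred2 j p)) (toX j P).
  by apply: sub_within (toX_within j P) => i; rewrite !inE => ->.
have [xp1 zp1] := circ_conj_out P (toX_within j P) pj.
have [xj1 /negbTE zj1] := toX_spec j P.
set P1 := circ_conj (toX j P) P in xp1 zp1 xj1 zj1.
case Pj: (nontrivial_on P j); last first.
  by exists (toX j P) => //=; rewrite -/P1 xp1 zp1 nontrivial_onE xj1 zj1 Pj.
exists (toX j P ++ [:: CNOTgate p j]).
  by rewrite all_cat toXj /= /gate_within /= eq_sym jp !eqxx orbT.
rewrite /= circ_cat -/P1 /= nontrivial_onE !ffunE eqxx (negbTE jp) eq_sym (negbTE jp).
by rewrite xp1 zp1 xj1 Pj xp zj1 eqxx addbF.
Qed.

(* The CNOT from j to p copies the Z on qubit p onto qubit j, cancelling it there. *)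
Lemma clear_Z_step p j P Q : j != p -> zb P p -> ~~ nontrivial_on Q j -> ~~ zb Q p ->
  exists2 C, all (gate_within (pred2 j p)) C &
    [/\ circ_conj C Q = Q, zb (circ_conj C P) p & ~~ nontrivial_on (circ_conj C P) j].
Proof.
move=> jp zp Qj zQp; have pj : ~~ pred1 j p by rewrite /= eq_sym.
have toZj : all (gate_within (pred2 j p)) (toZ j P).
  by apply: sub_within (toZ_within j P) => i; rewrite !inE => ->.
have toZQ : circ_conj (toZ j P) Q = Q.
  by apply: circ_conj_id (toZ_within j P) _ => i /eqP ->.
have [_ zp1] := circ_conj_out P (toZ_within j P) pj.
have [/negbTE xj1 zj1] := toZ_spec j P.
set P1 := circ_conj (toZ j P) P in zp1 xj1 zj1.
case Pj: (nontrivial_on P j); last first.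
  by exists (toZ j P) => //; rewrite toZQ -/P1 zp1 nontrivial_onE xj1 zj1 Pj.
exists (toZ j P ++ [:: CNOTgate j p]).
  by rewrite all_cat toZj /= /gate_within /= jp !eqxx orbT.
have cnotQ : gate_conj (CNOTgate j p) Q = Q.
  by apply: cnot_conj_id => //; move: Qj; rewrite nontrivial_onE; case/norP.
rewrite !circ_cat toZQ -/P1 -[circ_conj _ Q]/(gate_conj _ Q) cnotQ /=.
by rewrite nontrivial_onE !ffunE eqxx (negbTE jp) xj1 zj1 Pj zp1 zp.
Qed.

Lemma clear_qubits (W : pred 'I_n) p (Inv : Pauli n -> Pauli n -> Prop) : ~~ W p ->
  (forall j P Q, W j -> Inv P Q -> exists2 C, all (gate_within (pred2 j p)) C &
     Inv (circ_conj C P) (circ_conj C Q) /\ ~~ nontrivial_on (circ_conj C P) j) ->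
  forall P Q, Inv P Q -> exists2 C, all (gate_within (predU W (pred1 p))) C &
     Inv (circ_conj C P) (circ_conj C Q) /\
     forall j, W j -> ~~ nontrivial_on (circ_conj C P) j.
Proof.
move=> Wp step P Q PQ.
have : all W (enum W) by apply/allP => j; rewrite mem_enum.
suff cleared s : all W s -> exists2 C, all (gate_within (predU W (pred1 p))) C &
    Inv (circ_conj C P) (circ_conj C Q) /\
    forall j, j \in s -> ~~ nontrivial_on (circ_conj C P) j.
  by case/cleared => C CW [I sC]; exists C => //; split => // j Wj; rewrite sC ?mem_enum.
elim: s => [_|j s IH /andP [Wj Ws]]; first by exists [::].
have [C1 C1W [I1 s1]] := IH Ws; have [C2 C2W [I2 j2]] := step j _ _ Wj I1.
exists (C1 ++ C2).
  rewrite all_cat C1W; apply: sub_within C2W => i.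
  by rewrite !inE => /orP [/eqP ->|->]; rewrite ?Wj ?orbT.
rewrite !circ_cat; split => // i; rewrite inE; case: (eqVneq i j) => [-> //|ij] /= si.
have ip : i != p by apply: contraNneq Wp => <-; apply: (allP Ws).
by rewrite (nontrivial_circ_out _ C2W) ?s1 // !inE negb_or ij.
Qed.

Lemma isolate_X q p P : p != q -> nontrivial_on P p ->
  exists2 C, all (gate_within (predC1 q)) C & let P' := circ_conj C P in
    [/\ xb P' p, ~~ zb P' p & forall j, j != q -> j != p -> ~~ nontrivial_on P' j].
Proof.
move=> pq Pp; have [xp0 zp0] := toX_spec p P; rewrite Pp in xp0.
pose W := [pred j | (j != q) && (j != p)].
have Wp : ~~ W p by rewrite /= eqxx andbF.
have step j P' (_ : Pauli n) : W j -> xb P' p && ~~ zb P' p ->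
    exists2 C, all (gate_within (pred2 j p)) C &
      (xb (circ_conj C P') p && ~~ zb (circ_conj C P') p) /\
      ~~ nontrivial_on (circ_conj C P') j.
  move=> /andP [_ jp] /andP [xp zp].
  have [C CW [xp' zp' j']] := clear_X_step jp xp zp.
  by exists C => //; rewrite xp' zp'.
have [C CW [/andP [xp zp] cleared]] :=
  clear_qubits (Inv := fun P _ => xb P p && ~~ zb P p) Wp step
    (Q := P) (introT andP (conj xp0 zp0)).
exists (toX p P ++ C).
  rewrite all_cat; apply/andP; split.
    by apply: sub_within (toX_within p P) => i; rewrite !inE => /eqP ->.
  by apply: sub_within CW => i; rewrite !inE => /orP [/andP [] | /eqP ->].
by rewrite /= circ_cat; split => // j jq jp; apply: cleared; rewrite /= jq jp.
Qed.

Lemma isolate_Z q p P Q : p != q -> zb P p -> ~~ zb Q p ->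
  (forall j, j != q -> j != p -> ~~ nontrivial_on Q j) ->
  exists2 C, all (gate_within (predC1 q)) C &
    circ_conj C Q = Q /\ forall j, j != q -> j != p -> ~~ nontrivial_on (circ_conj C P) j.
Proof.
move=> pq zp zQp Qtriv; pose W := [pred j | (j != q) && (j != p)].
have Wp : ~~ W p by rewrite /= eqxx andbF.
have step j P' Q' : W j -> Q' = Q /\ zb P' p ->
    exists2 C, all (gate_within (pred2 j p)) C &
      (circ_conj C Q' = Q /\ zb (circ_conj C P') p) /\
      ~~ nontrivial_on (circ_conj C P') j.
  move=> /andP [jq jp] [-> zp'].
  by have [C CW [CQ zp'' j']] := clear_Z_step jp zp' (Qtriv j jq jp) zQp; exists C.
have [C CW [[CQ _] cleared]] := clear_qubits (Inv := fun P' Q' => Q' = Q /\ zb P' p)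
  Wp step (conj erefl zp).
exists C; last by split => // j jq jp; apply: cleared; rewrite /= jq jp.
by apply: sub_within CW => i; rewrite !inE => /orP [/andP [] | /eqP ->].
Qed.

Lemma two_qubit_reduction q P Q : symp (rest_factor q P) (rest_factor q Q) ->
  exists p, exists2 C, p != q /\ all (gate_within (predC1 q)) C &
    acts_only_on (circ_conj C P) (pred2 q p) /\ acts_only_on (circ_conj C Q) (pred2 q p).
Proof.
move=> PQ; have [p] := symp_nontrivial PQ; rewrite nontrivial_rest => /andP [pq Pp].
have [C1 C1q [xp zp P1triv]] := isolate_X pq Pp.
set P1 := circ_conj C1 P in xp zp P1triv; set Q1 := circ_conj C1 Q.
have zQp : zb Q1 p.
  (* the rest factor of P1 is X_p, and it still anticommutes with that of Q1 *)
  have := symp_rest_circ P Q C1q; rewrite PQ (symp_supp1 _ (p := p)).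
    by rewrite /symp1 !xb_rest !zb_rest pq xp (negbTE zp) /= andbT.
  move=> i ip; rewrite -/P1 nontrivial_rest negb_and.
  by case: (eqVneq i q) => [//|iq]; rewrite P1triv.
have [C2 C2q [P1fix Q1triv]] := isolate_Z pq zQp zp P1triv.
exists p, (C1 ++ C2); first by rewrite all_cat C1q C2q.
by rewrite !circ_cat -/P1 -/Q1 P1fix; split; apply: acts_only_on2.
Qed.
End PauliSymplectic.

Theorem mainTheorem5 (n : nat) (Hn : 1 < n) (Pa Pb Pc Pd : Pauli n)
  (Hab : anticommute Pa Pb)
  (C' : seq (gate n)) (q : 'I_n)
  (HC' : clifford_circuit C')
  (Ha : acts_only_on (circ_conj C' Pa) (pred1 q))
  (Hb : acts_only_on (circ_conj C' Pb) (pred1 q)) :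
  let beta := betab (anticommute Pa Pc) (anticommute Pb Pc)
                    (anticommute Pa Pd) (anticommute Pb Pd) in
  (anticommute (rest_factor q (circ_conj C' Pc)) (rest_factor q (circ_conj C' Pd))
     = addb (anticommute Pc Pd) beta)
  /\
  (anticommute (rest_factor q (circ_conj C' Pc)) (rest_factor q (circ_conj C' Pd)) ->
   exists (C : seq (gate n)) (q1 q2 : 'I_n),
     [/\ clifford_circuit C /\ q1 != q2,
         acts_only_on (circ_conj C Pa) (pred2 q1 q2),
         acts_only_on (circ_conj C Pb) (pred2 q1 q2),
         acts_only_on (circ_conj C Pc) (pred2 q1 q2) &
         acts_only_on (circ_conj C Pd) (pred2 q1 q2)]).
Proof.
move=> beta.
have symp_C' X Y : anticommute X Y = symp (circ_conj C' X) (circ_conj C' Y).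
  by rewrite anticommuteE symp_circ.
have AB : symp (circ_conj C' Pa) (circ_conj C' Pb) by rewrite -symp_C'.
split; first by rewrite anticommuteE /beta !symp_C' (symp_rest_betab _ _ Ha Hb AB).
rewrite anticommuteE => /two_qubit_reduction [p [C [pq Cq] [Cc Cd]]].
have fixq X : acts_only_on (circ_conj C' X) (pred1 q) ->
    acts_only_on (circ_conj (C' ++ C) X) (pred2 q p).
  move=> Xq; rewrite circ_cat (circ_conj_id Cq (acts_only_on1 Xq)).
  by move=> i /Xq /= ->.
exists (C' ++ C), q, p; split; [| exact: fixq Ha | exact: fixq Hb
  | by rewrite circ_cat | by rewrite circ_cat].
by rewrite /clifford_circuit all_cat -!/(clifford_circuit _) HC' (clifford_within Cq) eq_sym.
Qed.
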